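(* Let $\mathcal{M}$ be a Riemannian submanifold of a Euclidean space $\mathcal{E}$ (with induced norm $\|\cdot\|_{\mathcal{M}}$) and let $f:\mathcal{M}\times\mathbb{R}^n\to\mathbb{R}$ be differentiable. Let $\operatorname{Retr}_{\mathcal{M}}$ be a retraction on $\mathcal{M}$ and assume: (i) there is $L_y\ge0$ with $\|\nabla_yf(\boldsymbol{x},\boldsymbol{y}^1)-\nabla_yf(\boldsymbol{x},\boldsymbol{y}^2)\|\le L_y\|\boldsymbol{y}^1-\boldsymbol{y}^2\|$ for all $\boldsymbol{x}\in\mathcal{M}$, $\boldsymbol{y}^1,\boldsymbol{y}^2\in\mathbb{R}^n$; (ii) there is $L_x\ge1$ such that for all $\boldsymbol{y}$, $f(\cdot,\boldsymbol{y})$ has a gradient Lipschitz retraction with constant $L_x$ with respect to $\operatorname{Retr}_{\mathcal{M}}$, i.e. $f(\operatorname{Retr}_{\mathcal{M}}(\boldsymbol{x},\boldsymbol{v}),\boldsymbol{y})\le f(\boldsymbol{x},\boldsymbol{y})+\langle\operatorname{grad}_xf(\boldsymbol{x},\boldsymbol{y}),\boldsymbol{v}\rangle_{\boldsymbol{x}}+\frac{L_x}{2}\|\boldsymbol{v}\|_{\boldsymbol{x}}^2$ for all $\boldsymbol{x}\in\mathcal{M}$, $\boldsymbol{v}\in T_{\boldsymbol{x}}\mathcal{M}$; (iii) there is $L_{xy}\ge0$ with $\|\nabla_yf(\boldsymbol{x}^1,\boldsymbol{y})-\nabla_yf(\boldsymbol{x}^2,\boldsymbol{y})\|\le L_{xy}\|\boldsymbol{x}^1-\boldsymbol{x}^2\|_{\mathcal{M}}$;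 (iv) the injectivity radius of $\mathcal{M}$ is strictly positive and there is $L_1>0$ with $\|\operatorname{Retr}_{\mathcal{M}}(\boldsymbol{x},\boldsymbol{v})-\boldsymbol{x}\|_{\mathcal{M}}\le L_1\|\boldsymbol{v}\|_{\boldsymbol{x}}$ for all $\boldsymbol{x}\in\mathcal{M}$, $\boldsymbol{v}\in T_{\boldsymbol{x}}\mathcal{M}$. Define $\bar f:\mathcal{M}'=\mathcal{M}\times\mathbb{R}^n\to\mathbb{R}$ by $\bar f(\boldsymbol{x},\boldsymbol{y})=f(\boldsymbol{x},\boldsymbol{y})$ and the retraction $\operatorname{Retr}_{\mathcal{M}'}((\boldsymbol{x},\boldsymbol{y}),(\eta_x,\eta_y))=(\operatorname{Retr}_{\mathcal{M}}(\boldsymbol{x},\eta_x),\boldsymbol{y}+\eta_y)$. Then $\bar f$ has a gradient Lipschitz retraction with respect to $\operatorname{Retr}_{\mathcal{M}'}$ with constant $L_R=L_{xy}L_1+\max(L_x,L_y)$, i.e. for all $\boldsymbol{z}\in\mathcal{M}'$ and $\eta\in T_{\boldsymbol{z}}\mathcal{M}'$, $$\bar f(\operatorname{Retr}_{\mathcal{M}'}(\boldsymbol{z},\eta))\le\bar f(\boldsymbol{z})+\langle\operatorname{grad}\bar f(\boldsymbol{z}),\eta\rangle_{\boldsymbol{z}}+\frac{L_R}{2}\|\eta\|_{\boldsymbol{z}}^2.$$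
   Context: $\operatorname{grad}$ denotes the Riemannian gradient, $\nabla_y$ the Euclidean gradient in $\boldsymbol{y}$; $\mathcal{M}'$ carries the product metric $\langle(\eta_x,\eta_y),(\xi_x,\xi_y)\rangle_{\boldsymbol{z}}=\langle\eta_x,\xi_x\rangle_{\boldsymbol{x}}+\eta_y^\top\xi_y$. A retraction is a smooth map $\operatorname{Retr}:T\mathcal{M}\to\mathcal{M}$ with $\operatorname{Retr}(\boldsymbol{x},\boldsymbol{0})=\boldsymbol{x}$ and $D\operatorname{Retr}(\boldsymbol{x},\cdot)(\boldsymbol{0})=\mathrm{id}$. *)

From HB Require Import structures.
From mathcomp Require Import all_boot all_order all_algebra.
From mathcomp Require Import all_classical all_reals all_analysis.
Set Implicit Arguments. Unset Strict Implicit. Unset Printing Implicit Defensive.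
Import Order.TTheory GRing.Theory Num.Theory.
Import numFieldNormedType.Exports.
Local Open Scope classical_set_scope.
Local Open Scope ring_scope.

Definition dot {R : realType} {k : nat} (u v : 'rV[R]_k) : R := (u *m v^T) 0 0.
Definition enorm {R : realType} {k : nat} (v : 'rV[R]_k) : R := Num.sqrt (dot v v).

Definition tangent {R : realType} {k : nat} (S : set 'rV[R]_k) (x : 'rV[R]_k)
  : set 'rV[R]_k :=
  [set v | exists gam : R -> 'rV[R]_k,
      (forall t, S (gam t)) /\ gam 0 = x /\ derivable gam 0 1 /\
      derive1 gam 0 = v].

(* g is the Riemannian gradient at x (w.r.t. the metric induced by the
   Euclidean inner product) of F : S -> R, where S is a subset of R^k:
   g is tangent at x, and along every differentiable curve gam in S through x,
   (F o gam)'(0) = <g, gam'(0)>.  For S = setT this is the Euclidean gradient. *)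
Definition is_rgrad {R : realType} {k : nat} (S : set 'rV[R]_k)
  (F : 'rV[R]_k -> R) (x g : 'rV[R]_k) : Prop :=
  S x /\ tangent S x g /\
  forall gam : R -> 'rV[R]_k,
    (forall t, S (gam t)) -> gam 0 = x -> derivable gam 0 1 ->
    derivable (F \o gam) 0 1 /\ derive1 (F \o gam) 0 = dot g (derive1 gam 0).

(* M' = M x R^n, viewed inside R^(d+n) via z = row_mx x y; the Euclidean inner
   product on R^(d+n) is exactly the product metric. *)
Definition prodM {R : realType} {d n : nat} (M : set 'rV[R]_d) : set 'rV[R]_(d + n) :=
  [set z | M (lsubmx z)].

Definition fbar {R : realType} {d n : nat} (f : 'rV[R]_d -> 'rV[R]_n -> R)
  (z : 'rV[R]_(d + n)) : R := f (lsubmx z) (rsubmx z).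

Definition retrM' {R : realType} {d n : nat} (Retr : 'rV[R]_d -> 'rV[R]_d -> 'rV[R]_d)
  (z eta : 'rV[R]_(d + n)) : 'rV[R]_(d + n) :=
  row_mx (Retr (lsubmx z) (lsubmx eta)) (rsubmx z + rsubmx eta).

Definition is_retraction {R : realType} {d : nat} (M : set 'rV[R]_d)
  (Retr : 'rV[R]_d -> 'rV[R]_d -> 'rV[R]_d) : Prop :=
  forall x v, M x -> tangent M x v ->
    M (Retr x v) /\ Retr x 0 = x /\
    derivable (fun t : R => Retr x (t *: v)) 0 1 /\
    derive1 (fun t : R => Retr x (t *: v)) 0 = v.

From HB Require Import structures.
From mathcomp Require Import all_boot all_order all_algebra.
From mathcomp Require Import all_classical all_reals all_analysis.
From mathcomp Require Import ring lra.

(* Write z = (x, y), eta = (a, b) and x' = Retr x a, and split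
     f (x', y + b) - f (x, y) = [f (x', y + b) - f (x', y)] + [f (x', y) - f (x, y)].
   The second bracket is bounded by (ii).  The first is bounded by the Euclidean
   descent lemma for f (x', .), which follows from (i), but with grad_y f (x', y) in
   place of grad_y f (x, y); by (iii), (iv) and Cauchy-Schwarz this costs at most
   Lxy L1 |a| |b| <= Lxy L1 (|a|^2 + |b|^2) / 2. *)

Set Implicit Arguments.
Unset Strict Implicit.
Unset Printing Implicit Defensive.
Import Order.TTheory GRing.Theory Num.Theory.
Import numFieldNormedType.Exports.
Local Open Scope classical_set_scope.
Local Open Scope ring_scope.

Section Euclidean.
Variables (R : realType) (k : nat).
Implicit Types (a : R) (u v w : 'rV[R]_k).

Lemma dotE u v : dot u v = \sum_i u 0 i * v 0 i.
Proof. by rewrite /dot !mxE; apply: eq_bigr => i _; rewrite mxE. Qed.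

Lemma dotC u v : dot u v = dot v u.
Proof. by rewrite !dotE; apply: eq_bigr => i _; rewrite mulrC. Qed.

Lemma dotBl u v w : dot (u - v) w = dot u w - dot v w.
Proof. by rewrite !dotE -sumrB; apply: eq_bigr => i _; rewrite !mxE mulrBl. Qed.

Lemma dotZl a u v : dot (a *: u) v = a * dot u v.
Proof. by rewrite !dotE mulr_sumr; apply: eq_bigr => i _; rewrite !mxE mulrA. Qed.

Lemma dotr0 u : dot u 0 = 0.
Proof. by rewrite dotE big1 // => i _; rewrite mxE mulr0. Qed.

Lemma dot_ge0 u : 0 <= dot u u.
Proof. by rewrite dotE sumr_ge0 // => i _; rewrite -expr2 sqr_ge0. Qed.

Lemma dot_eq0 u : (dot u u == 0) = (u == 0).
Proof.
apply/idP/eqP => [|->]; last by rewrite dotr0.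
rewrite dotE psumr_eq0 => [/allP u0|i _]; last by rewrite -expr2 sqr_ge0.
apply/rowP => i; have /implyP := u0 i (mem_index_enum i).
by rewrite mulf_eq0 orbb mxE => /(_ isT) /eqP.
Qed.

Lemma enorm_ge0 u : 0 <= enorm u.
Proof. exact: sqrtr_ge0. Qed.

Lemma sqr_enorm u : enorm u ^+ 2 = dot u u.
Proof. by rewrite sqr_sqrtr // dot_ge0. Qed.

Lemma enormZ a u : enorm (a *: u) = `|a| * enorm u.
Proof. by rewrite /enorm dotZl dotC dotZl mulrA -expr2 sqrtrM ?sqr_ge0 // sqrtr_sqr. Qed.

Lemma cauchy_schwarz u v : dot u v <= enorm u * enorm v.
Proof.
have [->|u0] := eqVneq u 0; first by rewrite dotC dotr0 /enorm dotr0 sqrtr0 mul0r.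
have Au : 0 < dot u u by rewrite lt_def dot_eq0 u0 dot_ge0.
have discr : dot u v ^+ 2 <= dot u u * dot v v.
  set A := dot u u; set B := dot u v; set C := dot v v.
  (* |t u - v|^2 >= 0 at its minimiser t = B / A *)
  have : 0 <= dot ((B / A) *: u - v) ((B / A) *: u - v) by exact: dot_ge0.
  rewrite !dotBl !dotZl ![dot _ (_ - _)]dotC !dotBl !dotZl [dot v u]dotC -/A -/B -/C.
  have -> : B / A * (B / A * A - B) - (B / A * B - C) = (A * C - B ^+ 2) / A.
    by field; rewrite gt_eqF.
  by rewrite ler_pdivlMr // mul0r subr_ge0.
rewrite /enorm -sqrtrM ?dot_ge0 //; apply: le_trans (ler_wsqrtr discr).
by rewrite sqrtr_sqr ler_norm.
Qed.

End Euclidean.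

Section BlockDot.
Variables (R : realType) (k1 k2 : nat).

Lemma dot_row_mx (a c : 'rV[R]_k1) (b e : 'rV[R]_k2) :
  dot (row_mx a b) (row_mx c e) = dot a c + dot b e.
Proof. by rewrite /dot tr_row_mx mul_row_col mxE. Qed.

Lemma dot_hsubmx (u v : 'rV[R]_(k1 + k2)) :
  dot u v = dot (lsubmx u) (lsubmx v) + dot (rsubmx u) (rsubmx v).
Proof. by rewrite -dot_row_mx !hsubmxK. Qed.

Lemma sqr_enorm_hsubmx (u : 'rV[R]_(k1 + k2)) :
  enorm u ^+ 2 = enorm (lsubmx u) ^+ 2 + enorm (rsubmx u) ^+ 2.
Proof. by rewrite !sqr_enorm -dot_hsubmx. Qed.

End BlockDot.

Section Curves.
Variable R : realType.

Lemma is_derive1E (V : normedModType R) (f : R -> V) (t : R) (df : V) :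
  is_derive t 1 f df <-> derivable f t 1 /\ derive1 f t = df.
Proof. by rewrite derive1E; split => [[]|[]]. Qed.

Lemma is_derive_lineP (V W : normedModType R) (F : V -> W) (x v : V) (df : W) :
  is_derive x v F df <-> is_derive (0 : R) 1 (fun h : R => F (h *: v + x)) df.
Proof.
have quotE : (fun h : R => h^-1 *: (((fun h : R => F (h *: v + x)) \o shift 0) (h *: 1)
                 - F (0 *: v + x))) = (fun h => h^-1 *: ((F \o shift x) (h *: v) - F x)).
  by apply/funext => h /=; rewrite addr0 scale0r add0r [_%:A]mulr1.
by split=> -[dF DF]; split; move: dF DF; rewrite /derivable /derive ?quotE.
Qed.

Lemma is_derive_mxP m n (M : R -> 'M[R]_(m, n)) (t : R) D :
  is_derive t 1 M D <-> forall i j, is_derive t 1 (fun s => M s i j) (D i j).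
Proof.
split => [[dM <-] i j|dMij].
  have dMij : derivable (fun s => M s i j) t 1 by move: dM => /derivable_mxP.
  by split => //; rewrite derive_mx // mxE.
have dM : derivable M t 1 by apply/derivable_mxP => i j; case: (dMij i j).
split => //; apply/matrixP => i j; rewrite derive_mx // mxE.
by case: (dMij i j).
Qed.

Lemma is_derive_row_mx k1 k2 (g1 : R -> 'rV[R]_k1) (g2 : R -> 'rV[R]_k2) (t : R)
    (d1 : 'rV[R]_k1) (d2 : 'rV[R]_k2) :
  is_derive t 1 g1 d1 -> is_derive t 1 g2 d2 ->
  is_derive t 1 (fun s => row_mx (g1 s) (g2 s)) (row_mx d1 d2).
Proof.
move=> /is_derive_mxP dg1 /is_derive_mxP dg2; apply/is_derive_mxP => i j.
have -> : (fun s => row_mx (g1 s) (g2 s) i j) =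
    fun s => match fintype.split j with inl l => g1 s i l | inr l => g2 s i l end.
  by apply/funext => s; rewrite mxE.
by rewrite mxE; case: (fintype.split j).
Qed.

Lemma is_derive_lsubmx k1 k2 (g : R -> 'rV[R]_(k1 + k2)) (t : R) dg :
  is_derive t 1 g dg -> is_derive t 1 (fun s => lsubmx (g s)) (lsubmx dg).
Proof.
move=> /is_derive_mxP dg'; apply/is_derive_mxP => i j.
have -> : (fun s => lsubmx (g s) i j) = fun s => g s i (lshift k2 j).
  by apply/funext => s; rewrite mxE.
by rewrite mxE.
Qed.

End Curves.

Lemma tangent_setT (R : realType) k (y v : 'rV[R]_k) : tangent setT y v.
Proof.
exists (fun s => s *: v + y); split => //; split; first by rewrite scale0r add0r.
exact/is_derive1E/(@is_derive_lineP _ _ _ id).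
Qed.

Section Product.
Variables (R : realType) (d n : nat) (M : set 'rV[R]_d) (f : 'rV[R]_d -> 'rV[R]_n -> R).
Implicit Types z g : 'rV[R]_(d + n).

Lemma tangent_prodM_lsubmx z (eta : 'rV[R]_(d + n)) :
  tangent (prodM M) z eta -> tangent M (lsubmx z) (lsubmx eta).
Proof.
move=> [gam [Mgam [gam0 /is_derive1E dgam]]].
exists (fun s => lsubmx (gam s)); split => //; split; first by rewrite gam0.
exact/is_derive1E/is_derive_lsubmx.
Qed.

Lemma is_derive_fbar_row_mx z g (g1 : R -> 'rV[R]_d) (g2 : R -> 'rV[R]_n)
    (d1 : 'rV[R]_d) (d2 : 'rV[R]_n) :
  is_rgrad (prodM M) (fbar f) z g -> (forall t, M (g1 t)) ->
  row_mx (g1 0) (g2 0) = z -> is_derive (0 : R) 1 g1 d1 -> is_derive (0 : R) 1 g2 d2 ->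
  is_derive (0 : R) 1 (fun s => f (g1 s) (g2 s)) (dot (lsubmx g) d1 + dot (rsubmx g) d2).
Proof.
move=> [_ [_ gradz]] Mg1 z0 dg1 dg2.
have /is_derive1E[ddel Ddel] := is_derive_row_mx dg1 dg2.
have Mdel t : prodM M (row_mx (g1 t) (g2 t)) by rewrite /prodM /= row_mxKl.
have [dF DF] := gradz _ Mdel z0 ddel.
have -> : (fun s => f (g1 s) (g2 s)) = fbar f \o (fun s => row_mx (g1 s) (g2 s)).
  by apply/funext => s; rewrite /fbar /= row_mxKl row_mxKr.
by apply/is_derive1E; rewrite DF Ddel -{1}(hsubmxK g) dot_row_mx.
Qed.

Lemma rgrad_prodM_lsubmx z g : is_rgrad (prodM M) (fbar f) z g ->
  is_rgrad M (fun x => f x (rsubmx z)) (lsubmx z) (lsubmx g).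
Proof.
move=> gradz; have [Mz [Tg _]] := gradz; split => //; split.
  exact: tangent_prodM_lsubmx.
move=> gam Mgam gam0 dgam; apply/is_derive1E.
have z0 : row_mx (gam 0) (rsubmx z) = z by rewrite gam0 hsubmxK.
have := is_derive_fbar_row_mx gradz Mgam z0 (derivableP dgam) (is_derive_cst _ _ _).
by rewrite derive1E dotr0 addr0.
Qed.

Lemma rgrad_prodM_rsubmx z g : is_rgrad (prodM M) (fbar f) z g ->
  is_rgrad setT (f (lsubmx z)) (rsubmx z) (rsubmx g).
Proof.
move=> gradz; have [Mz _] := gradz; split => //; split; first exact: tangent_setT.
move=> gam _ gam0 dgam; apply/is_derive1E.
have z0 : row_mx (lsubmx z) (gam 0) = z by rewrite gam0 hsubmxK.
have := is_derive_fbar_row_mx gradz (fun=> Mz) z0 (is_derive_cst _ _ _) (derivableP dgam).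
by rewrite derive1E dotr0 add0r.
Qed.

End Product.

Section Descent.
Variables (R : realType) (k : nat) (F : 'rV[R]_k -> R).

Lemma is_derive_rgrad_line (y b G : 'rV[R]_k) (t : R) :
  is_rgrad setT F (t *: b + y) G -> is_derive t 1 (fun s => F (s *: b + y)) (dot G b).
Proof.
move=> [_ [_ gradF]].
have /is_derive1E[dl Dl] := (@is_derive_lineP _ _ _ id (t *: b + y) b b).1 (is_derive_id _ _).
have l0 : 0 *: b + (t *: b + y) = t *: b + y by rewrite scale0r add0r.
have [dFl DFl] := gradF _ (fun=> I) l0 dl.
apply/is_derive_lineP.
have -> : (fun h => F ((h *: 1 + t) *: b + y)) = F \o (fun h => id (h *: b + (t *: b + y))).
  by apply/funext => h /=; rewrite [_ *: 1]mulr1 scalerDl addrA.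
by apply/is_derive1E; rewrite DFl Dl.
Qed.

Lemma descent_lemma (L : R) (y b G : 'rV[R]_k) :
  (forall w, exists G, is_rgrad setT F w G) ->
  (forall y1 y2 g1 g2, is_rgrad setT F y1 g1 -> is_rgrad setT F y2 g2 ->
     enorm (g1 - g2) <= L * enorm (y1 - y2)) ->
  is_rgrad setT F y G ->
  F (y + b) <= F y + dot G b + L / 2 * enorm b ^+ 2.
Proof.
move=> gradF lipF gradG.
set K := L / 2 * enorm b ^+ 2.
(* phi' t = <grad F (y + t b) - G, b> - t L |b|^2, which is <= 0 for t >= 0. *)
pose phi t := F (t *: b + y) - (t * dot G b + t ^+ 2 * K).
have dphi (t : R) : derivable phi t 1 /\ (0 <= t -> derive1 phi t <= 0).
  have [Gt gradGt] := gradF (t *: b + y).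
  have dq : is_derive t 1 (fun s : R => s * dot G b + s ^+ 2 * K) (dot G b + 2 * t * K).
    by apply: is_derive_eq; rewrite /GRing.scale /=; ring.
  have /is_derive1E[dphi ->] := is_deriveB (is_derive_rgrad_line gradGt) dq.
  split => // t0; rewrite subr_le0 -lerBlDl -dotBl.
  apply: le_trans (cauchy_schwarz _ _) _.
  have := lipF _ _ _ _ gradGt gradG; rewrite addrK enormZ ger0_norm // => lipt.
  apply: le_trans (ler_wpM2r (enorm_ge0 _) lipt) _.
  by rewrite /K le_eqVlt; apply/orP; left; apply/eqP; field.
have : phi 1 <= phi 0.
  apply: (@ler0_derive1_le_cc R phi 0 1).
  - by move=> t _; case: (dphi t).
  - by move=> t; rewrite in_itv /= => /andP[/ltW t0 _]; apply: (dphi t).2.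
  - by apply: derivable_within_continuous => t _; case: (dphi t).
  - by rewrite in_itv /= lexx ler01.
  - by rewrite in_itv /= lexx ler01.
  - exact: ler01.
rewrite /phi /= scale1r scale0r add0r expr1n expr0n !mul1r !mul0r [b + y]addrC.
lra.
Qed.

End Descent.

Lemma mixed_quadratic_le (R : realFieldType) (c Lx Ly A B : R) : 0 <= c ->
  c * (A * B) + Lx / 2 * A ^+ 2 + Ly / 2 * B ^+ 2 <=
    (c + Num.max Lx Ly) / 2 * (A ^+ 2 + B ^+ 2).
Proof.
move=> c0; have AB : A * B <= (A ^+ 2 + B ^+ 2) / 2 by have := sqr_ge0 (A - B); nra.
have maxA : Lx * A ^+ 2 <= Num.max Lx Ly * A ^+ 2 by rewrite ler_wpM2r ?sqr_ge0 ?le_max ?lexx.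
have maxB : Ly * B ^+ 2 <= Num.max Lx Ly * B ^+ 2.
  by rewrite ler_wpM2r ?sqr_ge0 // le_max lexx orbT.
have := ler_wpM2l c0 AB; lra.
Qed.

Theorem lemma7 (R : realType) (d n : nat) (M : set 'rV[R]_d)
  (f : 'rV[R]_d -> 'rV[R]_n -> R) (Retr : 'rV[R]_d -> 'rV[R]_d -> 'rV[R]_d)
  (Ly Lx Lxy L1 : R) :
  (* f differentiable on M x R^n *)
  (forall z : 'rV[R]_(d + n), prodM M z ->
     exists g, is_rgrad (prodM M) (fbar f) z g) ->
  is_retraction M Retr ->
  (* (i) *)
  0 <= Ly ->
  (forall x y1 y2 g1 g2, M x ->
     is_rgrad setT (f x) y1 g1 -> is_rgrad setT (f x) y2 g2 ->
     enorm (g1 - g2) <= Ly * enorm (y1 - y2)) ->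
  (* (ii) *)
  1 <= Lx ->
  (forall y x v gx, M x -> tangent M x v ->
     is_rgrad M (fun x' => f x' y) x gx ->
     f (Retr x v) y <= f x y + dot gx v + Lx / 2 * enorm v ^+ 2) ->
  (* (iii) *)
  0 <= Lxy ->
  (forall x1 x2 y g1 g2, M x1 -> M x2 ->
     is_rgrad setT (f x1) y g1 -> is_rgrad setT (f x2) y g2 ->
     enorm (g1 - g2) <= Lxy * enorm (x1 - x2)) ->
  (* (iv) (retraction part) *)
  0 < L1 ->
  (forall x v, M x -> tangent M x v -> enorm (Retr x v - x) <= L1 * enorm v) ->
  forall (z eta g : 'rV[R]_(d + n)),
    prodM M z -> tangent (prodM M) z eta ->
    is_rgrad (prodM M) (fbar f) z g ->
    fbar f (retrM' Retr z eta) <=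
      fbar f z + dot g eta + (Lxy * L1 + Num.max Lx Ly) / 2 * enorm eta ^+ 2.
Proof.
move=> fdiff retr _ lipY _ descX Lxy0 lipXY L1_gt0 retrL1 z eta g Mz Teta gradz.
set x := lsubmx z; set y := rsubmx z; set a := lsubmx eta; set b := rsubmx eta.
have Ta : tangent M x a := tangent_prodM_lsubmx Teta.
have Mx' : M (Retr x a) := (retr _ _ Mz Ta).1.
have gradY w : exists G, is_rgrad setT (f (Retr x a)) w G.
  have Mw : prodM M (row_mx (Retr x a) w) by rewrite /prodM /= row_mxKl.
  have [g' gradg'] := fdiff _ Mw.
  by exists (rsubmx g'); move: (rgrad_prodM_rsubmx gradg'); rewrite row_mxKl row_mxKr.
have [G gradG] := gradY y.
have stepY := descent_lemma b gradY (fun y1 y2 g1 g2 => lipY _ y1 y2 g1 g2 Mx') gradG.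
have stepX := descX y _ _ _ Mz Ta (rgrad_prodM_lsubmx gradz).
have cross : dot G b - dot (rsubmx g) b <= Lxy * L1 * (enorm a * enorm b).
  rewrite -dotBl (le_trans (cauchy_schwarz _ _)) // mulrA ler_wpM2r ?enorm_ge0 //.
  rewrite (le_trans (lipXY _ _ _ _ _ Mx' Mz gradG (rgrad_prodM_rsubmx gradz))) //.
  by rewrite -mulrA ler_wpM2l // retrL1.
have := mixed_quadratic_le Lx Ly (enorm a) (enorm b) (mulr_ge0 Lxy0 (ltW L1_gt0)).
rewrite /fbar /retrM' row_mxKl row_mxKr dot_hsubmx sqr_enorm_hsubmx -/x -/y -/a -/b.
lra.
Qed.
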